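(* For every ring $R$ and every nonnegative integer $n$, the set $\mathcal{D}^n(R)$ is closed in $R^R$.
   Context: Rings are commutative with unit. A derivation on $R$ is a map $d\colon R\to R$ with $d(x+y)=d(x)+d(y)$ and $d(xy)=d(x)y+d(y)x$. Inductively: $\mathcal{D}^0(R)=\{0\}$; for $n>0$, $D\in\mathcal{D}^n(R)$ if $D$ is additive and $D(xy)-D(x)y-D(y)x=B(x,y)$ for all $x,y\in R$, where $B$ in each variable separately is in $\mathcal{D}^{n-1}(R)$. $R^R$ is the set of all maps $R\to R$ with the product topology, where $R$ has the discrete topology. *)

From HB Require Import structures.
From mathcomp Require Import all_boot all_order all_algebra.
From mathcomp Require Import all_classical all_reals all_analysis.
Set Implicit Arguments. Unset Strict Implicit. Unset Printing Implicit Defensive.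
Import Order.TTheory GRing.Theory Num.Theory.
Local Open Scope ring_scope.

(* Commutative rings with unit: R : comPzRingType (the zero ring is allowed). *)

Definition defect (R : comPzRingType) (D : R -> R) (x y : R) : R :=
  D (x * y) - D x * y - D y * x.

Definition additive_map (R : comPzRingType) (D : R -> R) : Prop :=
  forall x y : R, D (x + y) = D x + D y.

Fixpoint Dn (R : comPzRingType) (n : nat) : set (R -> R) :=
  match n with
  | 0%N => [set D | D = (fun _ => 0)]
  | n'.+1 => [set D | additive_map D /\
                (forall x : R, Dn n' (fun y => defect D x y)) /\
                (forall y : R, Dn n' (fun x => defect D x y))]
  end.

(* A map D lies in D^n(R) as soon as it agrees on every finite set with some
   member of D^n(R): by induction on n, since the conditions defining D^n(R)
   only ever evaluate D at finitely many points (x, y, x + y, and x * y for y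
   in a finite set). Such "finitely determined" sets of maps are closed in the
   product topology with discrete factors, because agreeing with D on a
   finite set is a neighbourhood of D. *)

From HB Require Import structures.
From mathcomp Require Import all_boot all_order all_algebra.
From mathcomp Require Import all_classical all_reals all_analysis.
Import GRing.Theory.
Local Open Scope classical_set_scope.
Local Open Scope ring_scope.

Definition finitely_determined {T : eqType} {U : Type} (A : set (T -> U)) :=
  forall f, (forall s : seq T, exists2 g, A g & {in s, g =1 f}) -> A f.

Section PointwiseDiscrete.
Variables (T : eqType) (U : choiceType).

Lemma ptws_nbhs_eq_in (s : seq T) (f : {ptws T -> discrete_topology U}) :
  nbhs f [set g : {ptws T -> discrete_topology U} | {in s, g =1 f}].
Proof.
elim: s => [|a s IHs]; first by apply: filterS filterT => g _ x.
have nbhs_a : nbhs f [set g : {ptws T -> discrete_topology U} | g a = f a].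
  exact: (@proj_continuous T (fun=> discrete_topology U) a f _ (discrete_set1 _)).
apply: filterS (filterI nbhs_a IHs) => g [ga gs] x.
by rewrite inE => /orP[/eqP->|/gs].
Qed.

Lemma finitely_determined_closed (A : set (T -> U)) :
  finitely_determined A -> closed (A : set {ptws T -> discrete_topology U}).
Proof.
move=> detA f Af; apply: detA => s.
have [g [Ag fg]] := Af _ (ptws_nbhs_eq_in s f).
by exists g.
Qed.

End PointwiseDiscrete.

Section Defect.
Variable R : comPzRingType.

Lemma defectC (D : R -> R) (x y : R) : defect D x y = defect D y x.
Proof. by rewrite /defect mulrC addrAC. Qed.

Lemma defect_eq_in (D D' : R -> R) (x : R) (s : seq R) :
  {in x :: [seq x * y | y <- s] ++ s, D' =1 D} ->
  {in s, defect D' x =1 defect D x}.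
Proof.
move=> DD' y ys; rewrite /defect !DD' // !inE ?mem_cat ?eqxx ?ys ?orbT //.
by rewrite (map_f (fun y => x * y)) ?orbT.
Qed.

Lemma Dn_finitely_determined (n : nat) : finitely_determined (@Dn R n).
Proof.
elim: n => [|n IHn] D approxD /=.
  by apply/funext => x; have [D' -> D'x] := approxD [:: x]; rewrite -D'x ?inE.
have additiveD : additive_map D.
  move=> x y; have [D' [addD' _] D'D] := approxD [:: x; y; x + y].
  by rewrite -!D'D ?inE ?eqxx ?orbT // addD'.
have defectD x : Dn n (defect D x).
  apply: IHn => s.
  have [D' [_ [defD' _]] D'D] := approxD (x :: [seq x * y | y <- s] ++ s).
  by exists (defect D' x); [exact: defD' | exact: defect_eq_in].
split=> //; split=> // y.
have -> : (fun x => defect D x y) = defect D y.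
  by apply/funext => x; exact: defectC.
exact: defectD.
Qed.

End Defect.

Theorem lemma2p1 (R : comPzRingType) (n : nat) :
  closed (Dn n : set {ptws R -> discrete_topology R}).
Proof. exact: (@finitely_determined_closed R R _ (@Dn_finitely_determined R n)). Qed.
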